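(* Let $\mathcal R$ be a DCTRS and $R=(l\to r\Leftarrow s_1\twoheadrightarrow t_1,\dots,s_n\twoheadrightarrow t_n)\in\mathcal R$ a rule such that, for some $i\in\{1,\dots,n\}$, $s_i$ and $t_i$ are constructor terms having a most general unifier $\theta$. Let $R'=(l\theta\to r\theta\Leftarrow s_1\theta\twoheadrightarrow t_1\theta,\dots,s_{i-1}\theta\twoheadrightarrow t_{i-1}\theta,\,s_{i+1}\theta\twoheadrightarrow t_{i+1}\theta,\dots,s_n\theta\twoheadrightarrow t_n\theta)$ and $\mathcal R'=(\mathcal R\setminus\{R\})\cup\{R'\}$. Then $\mathcal R'$ is a DCTRS and for all ground terms $s,t$: $s\xrightarrow{\mathsf i}{}^{*}_{\mathcal R}t$ if and only if $s\xrightarrow{\mathsf i}{}^{*}_{\mathcal R'}t$.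
   Context: Terms $\mathcal T(\mathcal F,\mathcal V)$; $\mathrm{Var}(\cdot)$ variables; $t|_p$ subterm, $t[u]_p$ replacement. A DCTRS is a finite set of conditional rules $l\to r\Leftarrow s_1\twoheadrightarrow t_1,\dots,s_n\twoheadrightarrow t_n$ ($l\notin\mathcal V$) with $\mathrm{Var}(r)\subseteq\mathrm{Var}(l,s_1,\dots,s_n,t_1,\dots,t_n)$ and $\mathrm{Var}(s_i)\subseteq\mathrm{Var}(l,t_1,\dots,t_{i-1})$ for all $i$. Defined symbols $\mathcal D_{\mathcal R}$ are the root symbols of left-hand sides; constructors are the remaining symbols; constructor terms are terms built from constructors and variables. Innermost rewriting on ground terms w.r.t. a DCTRS $\mathcal S$ (least relation): $s\xrightarrow{\mathsf i}_{\mathcal S}t$ iff there are a position $p$ of $s$ such that no proper subterm of $s|_p$ is reducible, a rule $l\to r\Leftarrow s_1\twoheadrightarrow t_1,\dots,s_n\twoheadrightarrow t_n\in\mathcal S$ and a normalized ground substitution $\sigma$ (every $x\sigma$ irreducible) with $s|_p=l\sigma$, $s_i\sigma\xrightarrow{\mathsf i}{}^{*}_{\mathcal S}t_i\sigma$ for all $i$, and $t=s[r\sigma]_p$. *)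

From Stdlib Require Import List Relations.
Import ListNotations.
Set Implicit Arguments.

Section TRS.
Variables F V : Type.

Inductive term : Type :=
| Var : V -> term
| Fun : F -> list term -> term.

Fixpoint vars (t : term) : list V :=
  match t with
  | Var x => [x]
  | Fun _ ts => (fix go (l : list term) : list V :=
                   match l with [] => [] | u :: l' => vars u ++ go l' end) ts
  end.

Fixpoint funs (t : term) : list F :=
  match t with
  | Var _ => []
  | Fun f ts => f :: (fix go (l : list term) : list F :=
                   match l with [] => [] | u :: l' => funs u ++ go l' end) ts
  end.

Definition ground (t : term) : Prop := vars t = [].

Definition subst := V -> term.

Fixpoint apply (s : subst) (t : term) : term :=
  match t with
  | Var x => s x
  | Fun f ts => Fun f (map (apply s) ts)
  end.

Definition pos := list nat.

Fixpoint subterm_at (t : term) (p : pos) : option term :=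
  match p with
  | [] => Some t
  | i :: p' =>
      match t with
      | Var _ => None
      | Fun _ ts => match nth_error ts i with
                    | Some u => subterm_at u p'
                    | None => None
                    end
      end
  end.

Fixpoint replace_at (t : term) (p : pos) (u : term) : option term :=
  match p with
  | [] => Some u
  | i :: p' =>
      match t with
      | Var _ => None
      | Fun f ts => match nth_error ts i with
                    | Some ti => match replace_at ti p' u with
                                 | Some ti' => Some (Fun f (firstn i ts ++ ti' :: skipn (S i) ts))
                                 | None => None
                                 end
                    | None => None
                    end
      end
  end.

(* conditional rules  l -> r <= s1 ->> t1, ..., sn ->> tn *)
Record rule : Type := mkRule {
  lhs : term;
  rhs : term;
  conds : list (term * term)
}.

Definition trs := rule -> Prop.

Definition finite_trs (S : trs) : Prop :=
  exists l : list rule, forall rho, S rho <-> In rho l.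

Definition is_var (t : term) : Prop := exists x, t = Var x.

Definition cond_vars (c : list (term * term)) : list V :=
  flat_map (fun st => vars (fst st) ++ vars (snd st)) c.

Definition dctrs_rule (rho : rule) : Prop :=
  ~ is_var (lhs rho) /\
  (forall x, In x (vars (rhs rho)) ->
     In x (vars (lhs rho) ++ cond_vars (conds rho))) /\
  (forall i si ti, nth_error (conds rho) i = Some (si, ti) ->
     forall x, In x (vars si) ->
       In x (vars (lhs rho) ++ flat_map (fun st => vars (snd st)) (firstn i (conds rho)))).

Definition dctrs (S : trs) : Prop :=
  finite_trs S /\ forall rho, S rho -> dctrs_rule rho.

Definition defined (S : trs) (f : F) : Prop :=
  exists rho ts, S rho /\ lhs rho = Fun f ts.

Definition constructor_term (S : trs) (t : term) : Prop :=
  forall f, In f (funs t) -> ~ defined S f.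

Definition unifier (th : subst) (u v : term) : Prop := apply th u = apply th v.

Definition mgu (th : subst) (u v : term) : Prop :=
  unifier th u v /\
  forall sg, unifier sg u v -> exists d : subst, forall x, sg x = apply d (th x).

(* instantiating a rule by th and deleting its i-th condition (0-based) *)
Definition inst_rule_del (th : subst) (rho : rule) (i : nat) : rule :=
  mkRule (apply th (lhs rho)) (apply th (rhs rho))
    (map (fun st => (apply th (fst st), apply th (snd st)))
         (firstn i (conds rho) ++ skipn (S i) (conds rho))).

(* one step of the defining operator of innermost rewriting, relative
   to a candidate relation X (used for reducibility and for conditions) *)
Definition reducible (X : relation term) (u : term) : Prop := exists w, X u w.

Definition innermost_step (S : trs) (X : relation term) (s t : term) : Prop :=
  ground s /\
  exists (p : pos) (rho : rule) (sg : subst),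
    S rho /\
    (forall x, ground (sg x) /\ ~ reducible X (sg x)) /\
    subterm_at s p = Some (apply sg (lhs rho)) /\
    (forall q u, q <> [] -> subterm_at (apply sg (lhs rho)) q = Some u ->
                 ~ reducible X u) /\
    (forall si ti, In (si, ti) (conds rho) ->
        clos_refl_trans term X (apply sg si) (apply sg ti)) /\
    replace_at s p (apply sg (rhs rho)) = Some t.

Definition is_fix (S : trs) (X : relation term) : Prop :=
  forall s t, X s t <-> innermost_step S X s t.

Definition innermost_rel (S : trs) (X : relation term) : Prop :=
  is_fix S X /\ forall Y, is_fix S Y -> forall s t, X s t -> Y s t.

End TRS.

From Stdlib Require Import List Relations ClassicalEpsilon.
Import ListNotations.
Set Implicit Arguments.

(* For every relation [X] that is a fixed point of the innermost-step operator of
   R, the operators of R and R' agree on [X]; so R and R' have the same fixed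
   points and hence the same least one.  A step with the rule R always satisfies
   its i-th condition trivially: the normalized instance [sg si] of a constructor
   term is irreducible, so [sg si ->> sg ti] forces [sg si = sg ti], [sg] factors
   through the mgu [th], and the step is an R'-step.  Conversely an R'-step with
   substitution [d] is an R-step with [d ∘ th], which is normalized because [th]
   maps variables to constructor terms.  R' is again deterministic because [th]
   identifies [si] and [ti]: the variables that [ti] used to provide are already
   provided by the earlier conditions. *)

Section Terms.
Variables F V : Type.
Notation term := (term F V).

Lemma term_ind' (P : term -> Prop) :
  (forall x, P (Var F x)) -> (forall f ts, Forall P ts -> P (Fun f ts)) -> forall t, P t.
Proof.
  intros HVar HFun. fix IH 1. intros [x|f ts].
  - apply HVar.
  - apply HFun. induction ts as [|u ts IHts]; constructor; [apply IH | exact IHts].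
Qed.

Lemma vars_Fun f ts : vars (Fun f ts) = flat_map (@vars F V) ts.
Proof. induction ts; simpl in *; congruence. Qed.

Lemma funs_Fun f ts : funs (Fun f ts) = f :: flat_map (@funs F V) ts.
Proof. induction ts; simpl in *; congruence. Qed.

Definition vars_img (th : subst F V) (A : list V) : list V :=
  flat_map (fun z => vars (th z)) A.

Lemma vars_img_app th A B : vars_img th (A ++ B) = vars_img th A ++ vars_img th B.
Proof. apply flat_map_app. Qed.

Lemma incl_vars_img th A B : incl A B -> incl (vars_img th A) (vars_img th B).
Proof.
  intros HAB x. unfold vars_img. rewrite !in_flat_map.
  intros (z & Hz & Hx). exists z. auto.
Qed.

Lemma vars_apply th t : vars (apply th t) = vars_img th (vars t).
Proof.
  induction t as [x|f ts IH] using term_ind'.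
  - symmetry. apply app_nil_r.
  - cbn [apply]. rewrite !vars_Fun.
    induction IH as [|u ts Hu _ IHts]; [reflexivity|].
    cbn [map flat_map]. rewrite Hu, IHts, vars_img_app. reflexivity.
Qed.

Lemma ground_apply (d : subst F V) t : (forall x, ground (d x)) -> ground (apply d t).
Proof.
  intros Hd. unfold ground. rewrite vars_apply. unfold vars_img.
  induction (vars t) as [|y A IHA]; simpl; [reflexivity|]. rewrite Hd. exact IHA.
Qed.

Lemma ground_of_ground_apply (d : subst F V) t y :
  ground (apply d t) -> In y (vars t) -> ground (d y).
Proof.
  unfold ground. rewrite vars_apply. intros Hg Hy. apply incl_l_nil.
  rewrite <- Hg. intros x Hx. unfold vars_img. apply in_flat_map. eauto.
Qed.

Lemma not_var_apply (th : subst F V) t : ~ is_var t -> ~ is_var (apply th t).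
Proof.
  destruct t as [x|f ts]; intros Ht [y Hy]; [apply Ht; exists x; reflexivity|discriminate].
Qed.

Lemma apply_apply (d th : subst F V) t :
  apply d (apply th t) = apply (fun x => apply d (th x)) t.
Proof.
  induction t as [x|f ts IH] using term_ind'; [reflexivity|]. cbn [apply].
  rewrite map_map. f_equal. apply map_ext_Forall. exact IH.
Qed.

Lemma apply_ext (s1 s2 : subst F V) t :
  (forall x, In x (vars t) -> s1 x = s2 x) -> apply s1 t = apply s2 t.
Proof.
  induction t as [x|f ts IH] using term_ind'; cbn [apply]; intros Hx.
  - apply Hx. left. reflexivity.
  - f_equal. apply map_ext_in. intros c Hc. rewrite Forall_forall in IH.
    apply IH; [exact Hc|]. intros y Hy. apply Hx. rewrite vars_Fun, in_flat_map. eauto.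
Qed.

Lemma in_funs_apply (d : subst F V) t f : In f (funs t) -> In f (funs (apply d t)).
Proof.
  induction t as [x|g ts IH] using term_ind'; [intros []|]. cbn [apply].
  rewrite !funs_Fun. intros [->|Hf]; [left; reflexivity|right].
  rewrite in_flat_map in *. destruct Hf as (c & Hc & Hf). exists (apply d c).
  rewrite Forall_forall in IH. split; [apply in_map|]; auto.
Qed.

Lemma subterm_at_app (u v : term) q p :
  subterm_at u q = Some v -> subterm_at u (q ++ p) = subterm_at v p.
Proof.
  revert u. induction q as [|j q IH]; simpl; intros u H; [congruence|].
  destruct u as [|f ts]; [discriminate|]. destruct (nth_error ts j); [auto|discriminate].
Qed.

Lemma replace_at_defined (u v w : term) p :
  subterm_at u p = Some v -> exists u', replace_at u p w = Some u'.
Proof.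
  revert u. induction p as [|j p IH]; simpl; intros u H; [eauto|].
  destruct u as [|f ts]; [discriminate|]. destruct (nth_error ts j); [|discriminate].
  destruct (IH _ H) as [u' ->]. eauto.
Qed.

Lemma subterm_at_apply (d : subst F V) t u p :
  subterm_at t p = Some u -> subterm_at (apply d t) p = Some (apply d u).
Proof.
  revert t. induction p as [|j p IH]; simpl; intros t H; [congruence|].
  destruct t as [|f ts]; [discriminate|]. cbn [apply]. rewrite nth_error_map.
  destruct (nth_error ts j); [apply IH; exact H|discriminate].
Qed.

Lemma subterm_at_var (t : term) y :
  In y (vars t) -> exists p, subterm_at t p = Some (Var F y).
Proof.
  induction t as [x|f ts IH] using term_ind'.
  - intros [<-|[]]. exists []. reflexivity.
  - rewrite vars_Fun, in_flat_map. intros (c & Hc & Hy).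
    destruct (In_nth_error _ _ Hc) as [j Hj]. rewrite Forall_forall in IH.
    destruct (IH c Hc Hy) as [p Hp]. exists (j :: p). simpl. rewrite Hj. exact Hp.
Qed.

End Terms.

Section Reducibility.
Variables F V : Type.
Notation term := (term F V).

Definition normalized (X : relation term) (sg : subst F V) : Prop :=
  forall x, ground (sg x) /\ ~ reducible X (sg x).

Lemma clos_rt_irreducible_eq (X : relation term) u v :
  clos_refl_trans term X u v -> ~ reducible X u -> u = v.
Proof.
  intros H Ha. apply clos_rt_rt1n in H. destruct H as [|w ? Hstep _]; [reflexivity|].
  exfalso. apply Ha. exists w. exact Hstep.
Qed.

Variables (S : trs F V) (X : relation term).
Hypothesis HX : is_fix S X.

Lemma reducible_of_redex (v : term) p r (sg : subst F V) :
  ground v -> S r -> normalized X sg ->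
  subterm_at v p = Some (apply sg (lhs r)) ->
  (forall q u, q <> [] -> subterm_at (apply sg (lhs r)) q = Some u -> ~ reducible X u) ->
  (forall a b, In (a, b) (conds r) -> clos_refl_trans term X (apply sg a) (apply sg b)) ->
  reducible X v.
Proof.
  intros Hv Hr Hsg Hp Hinner Hcond.
  destruct (replace_at_defined _ (apply sg (rhs r)) _ Hp) as [w Hw].
  exists w. apply HX. split; [exact Hv|].
  exists p, r, sg. repeat split; auto; apply Hsg.
Qed.

Lemma reducible_of_subterm (u v : term) q :
  ground u -> subterm_at u q = Some v -> reducible X v -> reducible X u.
Proof.
  intros Hu Hq [w Hw]. apply HX in Hw.
  destruct Hw as [_ (p & r & sg & Hr & Hsg & Hp & Hinner & Hcond & _)].
  apply reducible_of_redex with (q ++ p) r sg; auto.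
  rewrite (subterm_at_app _ _ p Hq). exact Hp.
Qed.

(* A redex inside [apply d c] cannot sit at a position of [c]: its root would be
   a defined symbol of [c]; nor strictly below one, since [d] is normalized. *)
Lemma irreducible_constructor_instance (d : subst F V) c :
  (forall r, S r -> ~ is_var (lhs r)) ->
  (forall f, In f (funs c) -> ~ defined S f) ->
  normalized X d -> ~ reducible X (apply d c).
Proof.
  intros Hlhs. induction c as [x|f cs IH] using term_ind'; intros Hc Hd; [apply Hd|].
  intros [w Hw]. apply HX in Hw.
  destruct Hw as [_ (p & r & sg & Hr & Hsg & Hp & Hinner & Hcond & _)].
  destruct p as [|j p].
  - injection Hp as Hp. destruct (lhs r) as [x|g us] eqn:El.
    + apply (Hlhs r Hr). exists x. exact El.
    + injection Hp as <- _. apply (Hc f); [rewrite funs_Fun; left; reflexivity|].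
      exists r, us. auto.
  - cbn [apply subterm_at] in Hp. rewrite nth_error_map in Hp.
    destruct (nth_error cs j) as [cj|] eqn:Ej; [|discriminate].
    pose proof (nth_error_In _ _ Ej) as Hcj. rewrite Forall_forall in IH.
    apply (IH cj Hcj); [|exact Hd|].
    + intros g Hg. apply Hc. rewrite funs_Fun. right. apply in_flat_map. eauto.
    + apply reducible_of_redex with p r sg; auto. apply ground_apply. apply Hd.
Qed.

(* Outside the variables of the range of [th] the factor is irrelevant, so it is
   redefined there to agree with [sg]. *)
Lemma normalized_factorization (sg th d : subst F V) :
  normalized X sg -> (forall x, sg x = apply d (th x)) ->
  exists d', normalized X d' /\ forall x, sg x = apply d' (th x).
Proof.
  intros Hsg Hd.
  set (d' := fun y => if excluded_middle_informative (exists x, In y (vars (th x)))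
                      then d y else sg y).
  exists d'. split.
  - intros y. unfold d'. destruct (excluded_middle_informative _) as [[x Hy]|_];
      [|apply Hsg].
    destruct (Hsg x) as [Hgx Hirr]. rewrite Hd in Hgx, Hirr. split.
    + exact (ground_of_ground_apply _ _ _ Hgx Hy).
    + intros Hred. apply Hirr. destruct (subterm_at_var _ _ Hy) as [q Hq].
      eapply reducible_of_subterm;
        [exact Hgx | exact (subterm_at_apply d _ _ Hq) | exact Hred].
  - intros x. rewrite Hd. apply apply_ext. intros y Hy. unfold d'.
    destruct (excluded_middle_informative _) as [_|Hn]; [reflexivity|].
    exfalso. eauto.
Qed.

End Reducibility.

Section Cap.
Variables F V : Type.
Notation term := (term F V).
Variable P : F -> Prop.
Variable x0 : V.

Fixpoint cap (t : term) : term :=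
  match t with
  | Var _ x => Var F x
  | Fun f ts => if excluded_middle_informative (P f) then Var F x0 else Fun f (map cap ts)
  end.

Lemma funs_cap t f : In f (funs (cap t)) -> ~ P f.
Proof.
  induction t as [x|g ts IH] using term_ind'; [intros []|]. simpl.
  destruct (excluded_middle_informative (P g)) as [_|HPg]; [intros []|].
  rewrite funs_Fun. intros [<-|Hf]; [exact HPg|].
  rewrite in_flat_map in Hf. destruct Hf as (u & Hu & Hf).
  apply in_map_iff in Hu as (c & <- & Hc). rewrite Forall_forall in IH. eauto.
Qed.

Lemma cap_apply (th : subst F V) c :
  (forall f, In f (funs c) -> ~ P f) -> cap (apply th c) = apply (fun z => cap (th z)) c.
Proof.
  induction c as [x|f cs IH] using term_ind'; intros Hc; [reflexivity|]. simpl.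
  destruct (excluded_middle_informative (P f)) as [HPf|_].
  { exfalso. apply (Hc f); [rewrite funs_Fun; left; reflexivity | exact HPf]. }
  f_equal. rewrite map_map. apply map_ext_in. intros c Hin.
  rewrite Forall_forall in IH. apply IH; [exact Hin|]. intros g Hg. apply Hc.
  rewrite funs_Fun. right. apply in_flat_map. eauto.
Qed.

End Cap.

(* [cap ∘ th] is again a unifier, so it factors through [th]: every symbol of
   [th x] survives in [cap (th x)], which avoids [P].  Any variable serves as
   [x0], e.g. [x] itself. *)
Lemma mgu_funs F V (P : F -> Prop) (si ti : term F V) th :
  (forall f, In f (funs si) -> ~ P f) -> (forall f, In f (funs ti) -> ~ P f) ->
  mgu th si ti -> forall x f, In f (funs (th x)) -> ~ P f.
Proof.
  intros Hsi Hti [Hunif Hmost] x f Hf.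
  assert (Hcap : unifier (fun z => cap P x (th z)) si ti).
  { unfold unifier. rewrite <- !cap_apply by assumption. rewrite Hunif. reflexivity. }
  destruct (Hmost _ Hcap) as [d Hd].
  apply (funs_cap P x (th x)). rewrite Hd. apply in_funs_apply. exact Hf.
Qed.

Section Conditions.
Variables F V : Type.
Notation term := (term F V).

Definition inst_cond (th : subst F V) (st : term * term) : term * term :=
  (apply th (fst st), apply th (snd st)).

Definition cond_rhs_vars (c : list (term * term)) : list V :=
  flat_map (fun st => vars (snd st)) c.

Fixpoint det_conds (B : list V) (c : list (term * term)) : Prop :=
  match c with
  | [] => True
  | (s, t) :: c' => incl (vars s) B /\ det_conds (B ++ vars t) c'
  end.

Lemma det_conds_nth B c :
  det_conds B c <->
  forall j s t, nth_error c j = Some (s, t) ->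
    incl (vars s) (B ++ cond_rhs_vars (firstn j c)).
Proof.
  revert B. induction c as [|[s t] c IH]; intros B; simpl.
  - split; [intros _ [|j]; discriminate | trivial].
  - rewrite IH. split.
    + intros [Hs Hc] [|j] s' t' Hj; simpl in Hj.
      * injection Hj as <- <-. rewrite app_nil_r. exact Hs.
      * specialize (Hc j s' t' Hj). unfold cond_rhs_vars in *. simpl.
        rewrite app_assoc. exact Hc.
    + intros H. split.
      * specialize (H 0 s t eq_refl). rewrite app_nil_r in H. exact H.
      * intros j s' t' Hj. specialize (H (S j) s' t' Hj). unfold cond_rhs_vars in *.
        simpl in H. rewrite app_assoc in H. exact H.
Qed.

Lemma det_conds_app B c1 c2 :
  det_conds B (c1 ++ c2) <-> det_conds B c1 /\ det_conds (B ++ cond_rhs_vars c1) c2.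
Proof.
  revert B. induction c1 as [|[s t] c1 IH]; intros B; simpl.
  - rewrite app_nil_r. tauto.
  - rewrite IH. unfold cond_rhs_vars. simpl. rewrite app_assoc. tauto.
Qed.

Lemma det_conds_weaken B B' c : incl B B' -> det_conds B c -> det_conds B' c.
Proof.
  revert B B'. induction c as [|[s t] c IH]; intros B B' HB; simpl; [trivial|].
  intros [Hs Hc]. split.
  - exact (incl_tran Hs HB).
  - apply IH with (B ++ vars t); [|exact Hc].
    apply incl_app_app; [exact HB | apply incl_refl].
Qed.

Lemma det_conds_inst th B c :
  det_conds B c -> det_conds (vars_img th B) (map (inst_cond th) c).
Proof.
  revert B. induction c as [|[s t] c IH]; intros B; simpl; [trivial|].
  intros [Hs Hc]. rewrite !vars_apply. split.
  - exact (incl_vars_img th Hs).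
  - rewrite <- vars_img_app. exact (IH _ Hc).
Qed.

Lemma cond_rhs_vars_inst th c :
  cond_rhs_vars (map (inst_cond th) c) = vars_img th (cond_rhs_vars c).
Proof.
  induction c as [|st c IH]; [reflexivity|]. unfold cond_rhs_vars in *. simpl.
  rewrite IH, vars_apply, vars_img_app. reflexivity.
Qed.

Lemma cond_vars_inst th c :
  cond_vars (map (inst_cond th) c) = vars_img th (cond_vars c).
Proof.
  induction c as [|st c IH]; [reflexivity|]. unfold cond_vars in *. simpl.
  rewrite IH, !vars_apply, !vars_img_app. reflexivity.
Qed.

Lemma incl_cond_rhs_vars c : incl (cond_rhs_vars c) (cond_vars c).
Proof.
  intros x. unfold cond_rhs_vars, cond_vars. rewrite !in_flat_map.
  intros (st & Hst & Hx). exists st. split; [exact Hst | apply in_or_app; right; exact Hx].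
Qed.

(* Once [th] identifies [s] and [t], the variables of [t] are determined by those
   of [s], hence by the earlier conditions. *)
Lemma vars_img_unified_cond th B pre s t post :
  apply th s = apply th t -> det_conds B (pre ++ (s, t) :: post) ->
  incl (vars_img th (vars s ++ vars t)) (vars_img th (B ++ cond_rhs_vars pre)).
Proof.
  intros Hst Hdet. apply det_conds_app in Hdet as [_ [Hs _]].
  rewrite vars_img_app, <- !vars_apply, <- Hst, !vars_apply.
  apply incl_app; apply incl_vars_img; exact Hs.
Qed.

Lemma det_conds_del th B pre s t post :
  apply th s = apply th t -> det_conds B (pre ++ (s, t) :: post) ->
  det_conds (vars_img th B) (map (inst_cond th) (pre ++ post)).
Proof.
  intros Hst Hdet. pose proof (@vars_img_unified_cond th B pre s t post Hst Hdet) as Hunif.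
  apply det_conds_app in Hdet as [Hpre [_ Hpost]].
  rewrite map_app. apply det_conds_app. split; [apply det_conds_inst; exact Hpre|].
  apply (det_conds_weaken (B := vars_img th ((B ++ cond_rhs_vars pre) ++ vars t))).
  - rewrite cond_rhs_vars_inst, !vars_img_app. intros x. rewrite !in_app_iff.
    specialize (Hunif x). rewrite !vars_img_app, !in_app_iff in Hunif. tauto.
  - apply det_conds_inst. exact Hpost.
Qed.

Lemma cond_vars_del th B pre s t post :
  apply th s = apply th t -> det_conds B (pre ++ (s, t) :: post) ->
  incl (vars_img th (B ++ cond_vars (pre ++ (s, t) :: post)))
       (vars_img th B ++ cond_vars (map (inst_cond th) (pre ++ post))).
Proof.
  intros Hst Hdet. pose proof (@vars_img_unified_cond th B pre s t post Hst Hdet) as Hunif.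
  pose proof (incl_vars_img th (incl_cond_rhs_vars pre)) as Hpre.
  rewrite cond_vars_inst. unfold cond_vars in *. rewrite !flat_map_app. simpl.
  rewrite !vars_img_app. intros x. specialize (Hunif x). specialize (Hpre x).
  rewrite !vars_img_app, !in_app_iff in *. tauto.
Qed.

End Conditions.

Lemma innermost_rel_unique F V (S S' : trs F V) (X X' : relation (term F V)) :
  (forall Y, is_fix S Y <-> is_fix S' Y) ->
  innermost_rel S X -> innermost_rel S' X' -> forall u v, X u v <-> X' u v.
Proof.
  intros Hfix [HX HXleast] [HX' HX'least] u v. split.
  - apply HXleast. apply Hfix. exact HX'.
  - apply HX'least. apply Hfix. exact HX.
Qed.

Lemma clos_rt_incl A (X Y : relation A) :
  inclusion A X Y -> inclusion A (clos_refl_trans A X) (clos_refl_trans A Y).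
Proof.
  intros HXY u v H. induction H as [u v H| |u w v _ IH1 _ IH2].
  - apply rt_step. apply HXY. exact H.
  - apply rt_refl.
  - exact (rt_trans _ _ _ _ _ IH1 IH2).
Qed.

Lemma firstn_skipn_elt A (pre post : list A) e :
  firstn (length pre) (pre ++ e :: post) ++ skipn (S (length pre)) (pre ++ e :: post) =
  pre ++ post.
Proof. induction pre as [|a pre IH]; simpl; [reflexivity|]. f_equal. exact IH. Qed.

Section Transformation.
Variables F V : Type.
Notation term := (term F V).
Variables (R : trs F V) (rho : rule F V).
Variables (pre post : list (term * term)) (si ti : term) (th : subst F V).
Hypothesis HR : dctrs R.
Hypothesis Hrho : R rho.
Hypothesis Hconds : conds rho = pre ++ (si, ti) :: post.
Hypothesis Hsi : constructor_term R si.
Hypothesis Hti : constructor_term R ti.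
Hypothesis Hmgu : mgu th si ti.

Definition unified_rule : rule F V :=
  mkRule (apply th (lhs rho)) (apply th (rhs rho)) (map (inst_cond th) (pre ++ post)).

Definition unified_trs : trs F V := fun r => (R r /\ r <> rho) \/ r = unified_rule.

Lemma th_unifies : apply th si = apply th ti.
Proof. apply Hmgu. Qed.

Lemma dctrs_rule_unified_rule : dctrs_rule unified_rule.
Proof.
  destruct (proj2 HR rho Hrho) as [Hlhs [Hrhs Hnth]].
  pose proof (proj2 (det_conds_nth _ _) Hnth) as Hdet. rewrite Hconds in Hdet.
  split; [|split].
  - exact (not_var_apply th Hlhs).
  - intros x Hx. unfold unified_rule in *. simpl in *. rewrite vars_apply in *.
    rewrite Hconds in Hrhs.
    exact (cond_vars_del th _ _ _ _ _ th_unifies Hdet x (incl_vars_img th Hrhs x Hx)).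
  - apply det_conds_nth. unfold unified_rule. simpl. rewrite vars_apply.
    exact (det_conds_del th _ _ _ _ _ th_unifies Hdet).
Qed.

Lemma dctrs_unified_trs : dctrs unified_trs.
Proof.
  destruct HR as [[l Hl] Hall]. split.
  - exists (unified_rule ::
              filter (fun r => if excluded_middle_informative (r = rho) then false
                               else true) l).
    intros r. unfold unified_trs. simpl. rewrite filter_In, <- Hl.
    destruct (excluded_middle_informative (r = rho)); intuition congruence.
  - intros r [[Hr _]| ->]; [exact (Hall r Hr) | exact dctrs_rule_unified_rule].
Qed.

Lemma defined_unified_trs f : defined unified_trs f -> defined R f.
Proof.
  intros (r & ts & [[Hr _]| ->] & Hl); [exists r, ts; auto|].
  assert (Hnv : ~ is_var (lhs rho)) by (apply HR; exact Hrho).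
  unfold unified_rule in Hl. simpl in Hl.
  destruct (lhs rho) as [y|g us] eqn:El; [exfalso; apply Hnv; exists y; reflexivity|].
  injection Hl as -> _. exists rho, us. auto.
Qed.

Section Steps.
Variables (S : trs F V) (X : relation term).
Hypothesis HX : is_fix S X.
Hypothesis HS_lhs : forall r, S r -> ~ is_var (lhs r).
Hypothesis HS_def : forall f, defined S f -> defined R f.

Lemma constructor_instance_irreducible (d : subst F V) c :
  constructor_term R c -> normalized X d -> ~ reducible X (apply d c).
Proof.
  intros Hc. apply irreducible_constructor_instance with S; [exact HX | exact HS_lhs|].
  intros f Hf HfS. exact (Hc f Hf (HS_def HfS)).
Qed.

(* Condition [si ->> ti] holds for the normalized instance only if [sg si = sg ti],
   since [sg si] is an irreducible constructor instance; then [sg] factors through [th]. *)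
Lemma innermost_step_to_unified s t :
  innermost_step R X s t -> innermost_step unified_trs X s t.
Proof.
  intros [Hs (p & r & sg & Hr & Hsg & Hp & Hinner & Hcond & Hrep)].
  split; [exact Hs|].
  destruct (excluded_middle_informative (r = rho)) as [->|Hne].
  2: { exists p, r, sg. split; [left; split; assumption|]. auto 6. }
  assert (Hsg_unif : unifier sg si ti).
  { apply clos_rt_irreducible_eq with X.
    - apply Hcond. rewrite Hconds. apply in_or_app. right. left. reflexivity.
    - exact (constructor_instance_irreducible Hsi Hsg). }
  destruct (proj2 Hmgu sg Hsg_unif) as [d Hd].
  destruct (normalized_factorization HX th d Hsg Hd) as (d' & Hd' & Hsg_d').
  assert (Hcomp : forall u, apply sg u = apply d' (apply th u)).
  { intros u. rewrite apply_apply. apply apply_ext. intros x _. apply Hsg_d'. }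
  exists p, unified_rule, d'. unfold unified_rule; simpl. rewrite <- !Hcomp.
  split; [right; reflexivity|]. split; [exact Hd'|]. repeat split; auto.
  intros a' b' Hin. apply in_map_iff in Hin as ([a b] & Hab & Hin).
  injection Hab as <- <-. rewrite <- !Hcomp. apply Hcond. rewrite Hconds.
  apply in_app_or in Hin as [Hin|Hin]; apply in_or_app; [left|right; right]; exact Hin.
Qed.

Lemma innermost_step_of_unified s t :
  innermost_step unified_trs X s t -> innermost_step R X s t.
Proof.
  intros [Hs (p & r & d & Hr & Hd & Hp & Hinner & Hcond & Hrep)].
  split; [exact Hs|].
  destruct Hr as [[Hr _]| ->].
  { exists p, r, d. auto 7. }
  set (sg := fun x => apply d (th x)).
  assert (Hcomp : forall u, apply d (apply th u) = apply sg u).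
  { intros u. apply apply_apply. }
  assert (Hsg : normalized X sg).
  { intros x. split; [apply ground_apply; apply Hd|].
    apply constructor_instance_irreducible; [|exact Hd].
    intros f Hf. exact (mgu_funs _ Hsi Hti Hmgu x f Hf). }
  unfold unified_rule in *; simpl in *. rewrite !Hcomp in *.
  exists p, rho, sg. split; [exact Hrho|]. split; [exact Hsg|]. repeat split; auto.
  intros a b Hin. rewrite Hconds in Hin. apply in_elt_inv in Hin as [Hab|Hin].
  - injection Hab as -> ->. rewrite <- !Hcomp, th_unifies. apply rt_refl.
  - rewrite <- !Hcomp. apply Hcond. apply in_map_iff. exists (a, b). auto.
Qed.

End Steps.

Lemma is_fix_unified_trs X : is_fix R X <-> is_fix unified_trs X.
Proof.
  assert (HR_lhs : forall r, R r -> ~ is_var (lhs r)) by apply HR.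
  assert (Hunified_lhs : forall r, unified_trs r -> ~ is_var (lhs r))
    by apply dctrs_unified_trs.
  split; intros Hfix s t; rewrite (Hfix s t); split.
  - apply innermost_step_to_unified with R; auto.
  - apply innermost_step_of_unified with R; auto.
  - apply innermost_step_of_unified with unified_trs; auto. exact defined_unified_trs.
  - apply innermost_step_to_unified with unified_trs; auto. exact defined_unified_trs.
Qed.

End Transformation.

Theorem mainTheorem14 (F V : Type) (R : trs F V) (rho : rule F V) (i : nat)
    (si ti : term F V) (th : subst F V) :
  dctrs R -> R rho ->
  nth_error (conds rho) i = Some (si, ti) ->
  constructor_term R si -> constructor_term R ti ->
  mgu th si ti ->
  let R' : trs F V := fun r => (R r /\ r <> rho) \/ r = inst_rule_del th rho i in
  dctrs R' /\
  forall (X X' : relation (term F V)),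
    innermost_rel R X -> innermost_rel R' X' ->
    forall s t : term F V, ground s -> ground t ->
      (clos_refl_trans (term F V) X s t <-> clos_refl_trans (term F V) X' s t).
Proof.
  intros HR Hrho Hi Hsi Hti Hmgu. cbv zeta.
  destruct (nth_error_split _ _ Hi) as (pre & post & Hconds & <-).
  assert (Hunified : inst_rule_del th rho (length pre) = unified_rule rho pre post th).
  { unfold inst_rule_del, unified_rule. rewrite Hconds, firstn_skipn_elt. reflexivity. }
  rewrite Hunified. split; [eapply dctrs_unified_trs; eassumption|].
  intros X X' HX HX' s t _ _.
  assert (HXX' : forall u v, X u v <-> X' u v).
  { eapply innermost_rel_unique; [|exact HX|exact HX'].
    intros Y. eapply is_fix_unified_trs; eassumption. }
  split; apply clos_rt_incl; intros u v; apply HXX'.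
Qed.
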